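(* Let $S$ be a finite semigroup with an anti-involution $*$, let $R$ be a commutative ring with $1$, and let $\alpha$ be a twisting from $S$ into $R$ with $\alpha(x,y)=\alpha(y^*,x^* )$ for all $x,y\in S$. Suppose that for each $\mathcal D$-class $D$ there is an idempotent $1_D\in D$ with $1_D^*=1_D$; let $G_D$ be the $\mathcal H$-class of $1_D$. Suppose that for each $\mathcal D$-class $D$ and all $x\,\mathcal L\,1_D$, $y\,\mathcal R\,1_D$, the element $\alpha(x,y)$ is a unit of $R$. Suppose that for each $D$ the twisted group algebra $R^\alpha[G_D]$ (twisting $\alpha|_{G_D\times G_D}$) is cellular with cell datum $(\Lambda_D,M_D,C,* )$, where $*$ is the linear extension of $*|_{G_D}$. Let $\mathcal D$ be the set of $\mathcal D$-classes, $\mathcal L_D$ the set of $\mathcal L$-classes in $D$, $\Lambda=\{(D,\lambda)\mid D\in\mathcal D,\lambda\in\Lambda_D\}$ ordered by $(D_1,\lambda_1)\le(D_2,\lambda_2)$ iff $D_1<_{\mathcal D}D_2$ or ($D_1=D_2$ and $\lambda_1\le\lambda_2$ in $\Lambda_{D_1}$), $M(D,\lambda)=\mathcal L_D\times M_D(\lambda)$, choose for each $L\in\mathcal L_D$ an element $u_L\in L$ with $u_L\,\mathcal R\,1_D$, and set \[C^{(D,\lambda)}_{(L,s)(K,t)}=u_L^*\cdot C^\lambda_{st}\cdot u_K\] (product in $R^\alpha[S]$). Then $R^\alpha[S]$ is cellular with cell datum $(\Lambda,M,C,* )$, where $*$ is the linear extension of $*$ to $R^\alpha[S]$.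
   Context: Green's relations on a semigroup $S$ ($S^1$ = $S$ with identity adjoined): $x\le_{\mathcal R}y$ iff $x\in yS^1$; $x\le_{\mathcal L}y$ iff $x\in S^1y$; $x\le_{\mathcal J}y$ iff $x\in S^1yS^1$; $\mathcal R,\mathcal L,\mathcal J$ the associated equivalences; $\mathcal H=\mathcal R\cap\mathcal L$; $\mathcal D$ generated by $\mathcal R\cup\mathcal L$. For finite $S$, $\mathcal D=\mathcal J$ and $\le_{\mathcal J}$ induces a partial order $\le_{\mathcal D}$ on $\mathcal D$-classes; $<_{\mathcal D}$ is its strict version. An anti-involution of $S$: $(x^* )^*=x$, $(xy)^*=y^*x^*$. A twisting $\alpha:S\times S\to R$ satisfies $\alpha(x,y)\alpha(xy,z)=\alpha(x,yz)\alpha(y,z)$; $R^\alpha[S]$ is the free $R$-module on $S$ with product $x\cdot y=\alpha(x,y)(xy)$. An anti-involution of an $R$-algebra is $R$-linear with $(a^* )^*=a$, $(ab)^*=b^*a^*$. Cellular algebra with cell datum $(\Lambda,M,C,* )$: (C1) $\Lambda$ finite poset, finite sets $M(\lambda)$, and $\{C^\lambda_{st}\}$ an $R$-basis; (C2) $*$ anti-involution with $(C^\lambda_{st})^*=C^\lambda_{ts}$; (C3) for all $\lambda,s,a$ there are $r_a(s',s)\in R$ with $aC^\lambda_{st}\in\sum_{s'}r_a(s',s)C^\lambda_{s't}+A(<\lambda)$ for all $t$, where $A(<\lambda)$ is the span of the $C^\mu_{s''t''}$ with $\mu<\lambda$. *)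

From HB Require Import structures.
From mathcomp Require Import all_boot all_order all_algebra.
Set Implicit Arguments. Unset Strict Implicit. Unset Printing Implicit Defensive.
Import GRing.Theory.
Local Open Scope ring_scope.

Section Green.
Variables (S : finType) (op : S -> S -> S).

Definition leR (x y : S) : bool := (x == y) || [exists s, x == op y s].
Definition leLg (x y : S) : bool := (x == y) || [exists s, x == op s y].
Definition leJ (x y : S) : bool :=
  [|| x == y, [exists s, x == op s y], [exists s, x == op y s]
    | [exists s, [exists t, x == op (op s y) t]]].
Definition Rrel (x y : S) : bool := leR x y && leR y x.
Definition Lrel (x y : S) : bool := leLg x y && leLg y x.
Definition Hrel (x y : S) : bool := Rrel x y && Lrel x y.
Definition Drel (x y : S) : bool := connect (fun a b => Rrel a b || Lrel a b) x y.

Definition dclasses : {set {set S}} := [set [set y | Drel x y] | x : S].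
Definition hclass (x : S) : {set S} := [set y | Hrel x y].
Definition dle (D1 D2 : {set S}) : bool := [exists x in D1, exists y in D2, leJ x y].
Definition dlt (D1 D2 : {set S}) : bool := dle D1 D2 && (D1 != D2).
Definition lclasses_in (D : {set S}) : {set {set S}} := [set [set y | Lrel x y] | x in D].
End Green.

Notation dcl op := {D : {set _} | D \in dclasses op}.
Notation lcl op D := {L : {set _} | L \in lclasses_in op D}.

(* elements: {ffun S -> R^o}, i.e. sum_x f(x) x ; basis element x is tdelta x *)
Section Twisted.
Variables (R : comPzRingType) (S : finType).

Definition tdelta (x : S) : {ffun S -> R^o} := [ffun z => (z == x)%:R].

(* product: x . y = alpha(x,y) (xy), extended bilinearly *)
Definition tmul (op : S -> S -> S) (alpha : S -> S -> R) (f g : {ffun S -> R^o})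
  : {ffun S -> R^o} :=
  [ffun z => \sum_(x : S) \sum_(y : S)
               (if op x y == z then f x * g y * alpha x y else 0)].

Definition tstar (st : S -> S) (f : {ffun S -> R^o}) : {ffun S -> R^o} :=
  \sum_(x : S) f x *: tdelta (st x).
End Twisted.

(* The algebra is the R-submodule A of V (closed under mul), with product mul. *)
Definition lincomb (R : comPzRingType) (V : lmodType R) (Lam : finType)
  (M : Lam -> finType) (C : forall l, M l -> M l -> V)
  (c : forall l, M l -> M l -> R) : V :=
  \sum_(l : Lam) \sum_(s : M l) \sum_(t : M l) c l s t *: C l s t.

Definition cellular (R : comPzRingType) (V : lmodType R) (A : V -> Prop)
  (mul : V -> V -> V) (star : V -> V)
  (Lam : finType) (le : Lam -> Lam -> Prop) (M : Lam -> finType)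
  (C : forall l, M l -> M l -> V) : Prop :=
  (* C1: finite poset, and {C^l_st} an R-basis of A *)
  [/\ [/\ [/\ (forall l, le l l),
              (forall l m, le l m -> le m l -> l = m) &
              (forall l m n, le l m -> le m n -> le l n)],
          (forall l s t, A (C l s t)),
          (forall v, A v -> exists c, v = lincomb C c) &
          (forall c1 c2, lincomb C c1 = lincomb C c2 ->
             forall l s t, c1 l s t = c2 l s t)],
  (* C2: star is an anti-involution of the algebra with (C^l_st)^* = C^l_ts *)
      [/\ (forall a, A a -> A (star a)),
          (forall k a b, A a -> A b -> star (k *: a + b) = k *: star a + star b),
          (forall a, A a -> star (star a) = a),
          (forall a b, A a -> A b -> star (mul a b) = mul (star b) (star a)) &
          (forall l s t, star (C l s t) = C l t s)] &
      forall l (s : M l) a, A a ->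
        exists r : M l -> R, forall t : M l,
          exists c : forall m, M m -> M m -> R,
            (forall m s'' t'', ~ (le m l /\ m <> l) -> c m s'' t'' = 0) /\
            mul a (C l s t) - \sum_(s' : M l) r s' *: C l s' t = lincomb C c].

Section BigDatum.
Variables (R : comPzRingType) (S : finType) (op : S -> S -> S)
  (alpha : S -> S -> R) (st : S -> S).
Variables (Lam : dcl op -> finType) (leL : forall D, Lam D -> Lam D -> Prop)
  (M : forall D : dcl op, Lam D -> finType)
  (C : forall (D : dcl op) (l : Lam D), M l -> M l -> {ffun S -> R^o})
  (u : forall D : dcl op, lcl op (val D) -> S).

Definition bigle (p q : {D : dcl op & Lam D}) : Prop :=
  dlt op (val (tag p)) (val (tag q)) \/
  exists D (l1 l2 : Lam D),
    [/\ p = Tagged (fun D => Lam D) l1, q = Tagged (fun D => Lam D) l2 & leL l1 l2].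

Definition bigM (p : {D : dcl op & Lam D}) : finType :=
  Finite.clone (lcl op (val (tag p)) * M (tagged p))%type _.

Definition bigC (p : {D : dcl op & Lam D}) (x y : bigM p) : {ffun S -> R^o} :=
  tmul op alpha
    (tmul op alpha (tdelta R (st (u x.1))) (C x.2 y.2))
    (tdelta R (u y.1)).
End BigDatum.

From HB Require Import structures.
From mathcomp Require Import all_boot all_order all_algebra.
From Stdlib Require Import Classical_Prop.
Import GRing.Theory.
Set Implicit Arguments. Unset Strict Implicit. Unset Printing Implicit Defensive.

(* By Green's lemma every [z] in [S] is uniquely [u_L^* g u_K], with [D] the D-class of [z],
   [K] the L-class of [z], [L] that of [z^*] and [g] in the group [G_D]; the twisting scalars
   that appear are units by hypothesis. So [R^alpha[S]] is the direct sum, over [D], [L], [K],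
   of the images of [R^alpha[G_D]] under [f |-> u_L^* f u_K], which turns the cellular bases
   of the [R^alpha[G_D]] into a basis of [R^alpha[S]] (C1); [*] sends [u_L^* f u_K] to
   [u_K^* f^* u_L] (C2). For (C3) it suffices to multiply by a single [x] in [S]: either
   [x u_L^*] is still L-related to [1_D], hence equal to [u_L'^* h] with [h] in [G_D], and
   (C3) in [R^alpha[G_D]] applies to [h C_st]; or, by stability, every [x u_L^* g u_K] lies
   in a strictly lower D-class. *)

(* Green's relations of S are handled inside the monoid S^1, encoded as [option S]
   with [None] the adjoined identity. *)
Section Monoid.
Variables (S : finType) (op : S -> S -> S).
Hypothesis opA : forall x y z, op (op x y) z = op x (op y z).

Definition omul (a b : option S) : option S :=
  match a, b with
  | Some x, Some y => Some (op x y)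
  | None, _ => b
  | _, None => a
  end.

Local Notation "x ** y" := (omul x y) (at level 40, left associativity).

Lemma omulA : associative omul.
Proof. by case=> [x|] [y|] [z|] //=; rewrite opA. Qed.

Lemma omul1 a : a ** None = a. Proof. by case: a. Qed.

Lemma leLP x y : reflect (exists s, Some x = s ** Some y) (leLg op x y).
Proof.
apply: (iffP orP).
  by case=> [/eqP->|/existsP[s /eqP->]]; [exists None|exists (Some s)].
by case=> [[s|]] /= [->]; [right; apply/existsP; exists s|left].
Qed.

Lemma leRP x y : reflect (exists s, Some x = Some y ** s) (leR op x y).
Proof.
apply: (iffP orP).
  by case=> [/eqP->|/existsP[s /eqP->]]; [exists None|exists (Some s)].
by case=> [[s|]] /= [->]; [right; apply/existsP; exists s|left].
Qed.

Lemma leJP x y : reflect (exists s t, Some x = s ** Some y ** t) (leJ op x y).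
Proof.
apply: (iffP idP).
  case/or4P=> [/eqP->|/existsP[s /eqP->]|/existsP[s /eqP->]|/existsP[s /existsP[t /eqP->]]].
  - by exists None, None.
  - by exists (Some s), None.
  - by exists None, (Some s).
  - by exists (Some s), (Some t).
case=> [[s|]] [[t|]] /= [->]; apply/or4P.
- by constructor 4; apply/existsP; exists s; apply/existsP; exists t.
- by constructor 2; apply/existsP; exists s.
- by constructor 3; apply/existsP; exists t.
- by constructor 1.
Qed.

Lemma leJ_refl x : leJ op x x. Proof. by apply/leJP; exists None, None. Qed.

Lemma leL_trans x y z : leLg op x y -> leLg op y z -> leLg op x z.
Proof.
move=> /leLP[s Hx] /leLP[t Hy]; apply/leLP; exists (s ** t).
by rewrite Hx Hy omulA.
Qed.

Lemma leR_trans x y z : leR op x y -> leR op y z -> leR op x z.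
Proof.
move=> /leRP[s Hx] /leRP[t Hy]; apply/leRP; exists (t ** s).
by rewrite Hx Hy omulA.
Qed.

Lemma leJ_trans x y z : leJ op x y -> leJ op y z -> leJ op x z.
Proof.
move=> /leJP[s [s' Hx]] /leJP[t [t' Hy]]; apply/leJP; exists (s ** t), (t' ** s').
by rewrite Hx Hy !omulA.
Qed.

Lemma leL_leJ x y : leLg op x y -> leJ op x y.
Proof. by move=> /leLP[s Hx]; apply/leJP; exists s, None; rewrite omul1. Qed.

Lemma leR_leJ x y : leR op x y -> leJ op x y.
Proof. by move=> /leRP[s Hx]; apply/leJP; exists None, s. Qed.

Lemma Lrel_refl x : Lrel op x x. Proof. by rewrite /Lrel /leLg eqxx. Qed.
Lemma Rrel_refl x : Rrel op x x. Proof. by rewrite /Rrel /leR eqxx. Qed.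
Lemma Lrel_sym x y : Lrel op x y = Lrel op y x. Proof. by rewrite /Lrel andbC. Qed.
Lemma Rrel_sym x y : Rrel op x y = Rrel op y x. Proof. by rewrite /Rrel andbC. Qed.

Lemma Lrel_trans x y z : Lrel op x y -> Lrel op y z -> Lrel op x z.
Proof. by move=> /andP[? ?] /andP[? ?]; apply/andP; split; apply: leL_trans; eassumption. Qed.

Fixpoint opow (c : option S) n := if n is n'.+1 then c ** opow c n' else None.

Lemma opowD c m n : opow c (m + n) = opow c m ** opow c n.
Proof. by elim: m => [|m IH] //=; rewrite IH omulA. Qed.

Lemma opowSr c n : opow c n.+1 = opow c n ** c.
Proof. by rewrite -addn1 opowD /= omul1. Qed.

(* Two powers c^i = c^j with i < j exist by finiteness; c^(k p) with p = j - i and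
   k p >= i is then idempotent. *)
Lemma idempotent_power c : exists2 n, 0 < n & opow c n ** opow c n = opow c n.
Proof.
pose f (i : 'I_(#|{: option S}|).+1) := opow c i.
have /injectivePn[i [j neq_ij eq_fij]] : ~~ injectiveb f.
  by apply/negP=> /injectiveP/leq_card; rewrite card_ord ltnn.
wlog lt_ij : i j neq_ij eq_fij / (i < j)%N.
  move=> W; case: (ltngtP i j) => [|lt_ji|/val_inj eq_ij]; first exact: W.
    by apply: (W j i) => //; rewrite eq_sym.
  by rewrite eq_ij eqxx in neq_ij.
rewrite /f in eq_fij; set p := (j - i)%N.
have p_gt0 : (0 < p)%N by rewrite subn_gt0.
have period k : opow c (i + k) = opow c (i + k + p).
  by rewrite addnAC /p subnKC ?(ltnW lt_ij) // !opowD eq_fij.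
have periodic k q : opow c (i + k) = opow c (i + k + q * p).
  elim: q k => [|q IH] k; first by rewrite mul0n addn0.
  by rewrite mulSn addnA period -addnA IH !addnA.
have le_i_kp : (i <= i.+1 * p)%N.
  by apply: leq_trans (leqnSn i) _; rewrite -{1}(muln1 i.+1) leq_mul2l.
exists (i.+1 * p)%N; first by rewrite muln_gt0.
by rewrite -opowD -{1 3}(subnKC le_i_kp) -periodic.
Qed.

(* Stability: from [a = s b] and [b = p a q] we get [b = (p s)^n b q^n] for all [n], and an
   idempotent power of [p s] then fixes [b] on the left. *)
Lemma leL_stable a b : leLg op a b -> leJ op b a -> leLg op b a.
Proof.
move=> /leLP[s Ha] /leJP[p [q Hb]].
set c := p ** s.
have Hb1 : Some b = c ** (Some b ** q) by rewrite {1}Hb Ha /c !omulA.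
have Hn n : Some b = opow c n ** (Some b ** opow q n).
  elim: n => [|n IH] //.
  by rewrite {1}Hb1 {1}IH [opow q n.+1]opowSr -[opow c n.+1]/(c ** opow c n) !omulA.
have [[|n] // _ idem] := idempotent_power c.
have Hcb : opow c n.+1 ** Some b = Some b by rewrite {1}(Hn n.+1) omulA idem -Hn.
by apply/leLP; exists (opow c n ** p); rewrite -{1}Hcb opowSr /c Ha !omulA.
Qed.
End Monoid.
Arguments omul {S} op a b.

Section DequalsJ.
Variables (S : finType) (op : S -> S -> S).
Hypothesis opA : forall x y z, op (op x y) z = op x (op y z).

Let fop x y := op y x.
Let fopA : forall x y z, fop (fop x y) z = fop x (fop y z).
Proof. by move=> x y z; rewrite /fop opA. Qed.
Let omul_fop a b : omul fop a b = omul op b a.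
Proof. by case: a; case: b. Qed.

Lemma leR_stable a b : leR op a b -> leJ op b a -> leR op b a.
Proof.
move=> ab /leJP[s [t Hb]].
have flip_ba : leJ fop b a by apply/leJP; exists t, s; rewrite !omul_fop Hb omulA.
by apply: (leL_stable fopA).
Qed.

Lemma Drel_sym x y : Drel op x y = Drel op y x.
Proof. by apply: sym_connect_sym => a b; rewrite Rrel_sym Lrel_sym. Qed.

Lemma Drel_trans x y z : Drel op x y -> Drel op y z -> Drel op x z.
Proof. exact: connect_trans. Qed.

Lemma Lrel_Drel x y : Lrel op x y -> Drel op x y.
Proof. by move=> xy; apply: connect1; rewrite xy orbT. Qed.

Lemma Rrel_Drel x y : Rrel op x y -> Drel op x y.
Proof. by move=> xy; apply: connect1; rewrite xy. Qed.

Lemma Drel_ind (P : S -> S -> Prop) :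
  (forall x, P x x) ->
  (forall x y z, Rrel op x y || Lrel op x y -> P y z -> P x z) ->
  forall x y, Drel op x y -> P x y.
Proof.
move=> Prefl Pstep x y /connectP[p]; elim: p x => [|z p IH] x /=; first by move=> _ ->.
by case/andP=> xz zp yE; apply: Pstep xz (IH _ zp yE).
Qed.

Lemma Drel_leJ x y : Drel op x y -> leJ op x y && leJ op y x.
Proof.
apply: (Drel_ind (P := fun x y => leJ op x y && leJ op y x)).
  by move=> z; rewrite leJ_refl.
move=> a b c /orP[] /andP[ab ba] /andP[bc cb].
  by rewrite (leJ_trans opA (leR_leJ ab) bc) (leJ_trans opA cb (leR_leJ ba)).
by rewrite (leJ_trans opA (leL_leJ ab) bc) (leJ_trans opA cb (leL_leJ ba)).
Qed.

(* If x = s y t, then z = s y satisfies x R z L y, by stability. *)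
Lemma leJ_Drel x y : leJ op x y -> leJ op y x -> Drel op x y.
Proof.
move=> /leJP[s [t Hx]] yx.
have [z Hz] : exists z, Some z = omul op s (Some y).
  by case: s {Hx} => [s|]; [exists (op s y)|exists y].
have zy : leLg op z y by apply/leLP; exists s.
have xz : leR op x z by apply/leRP; exists t; rewrite Hz.
have yz := leL_stable opA zy (leJ_trans opA yx (leR_leJ xz)).
have zx := leR_stable xz (leJ_trans opA (leL_leJ zy) yx).
apply: (Drel_trans (y := z)); first by apply: Rrel_Drel; rewrite /Rrel xz.
by apply: Lrel_Drel; rewrite /Lrel zy.
Qed.
End DequalsJ.

Section Involution.
Variables (S : finType) (op : S -> S -> S) (st : S -> S).
Hypothesis stK : involutive st.
Hypothesis stM : forall x y, st (op x y) = op (st y) (st x).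

Let omap_st_omul a b : omap st (omul op a b) = omul op (omap st b) (omap st a).
Proof. by case: a => [a|]; case: b => [b|] //=; rewrite stM. Qed.

Lemma st_leL x y : leLg op x y -> leR op (st x) (st y).
Proof.
move=> /leLP[s Hx]; apply/leRP; exists (omap st s).
by rewrite -[Some (st x)]/(omap st (Some x)) Hx omap_st_omul.
Qed.

Lemma st_leR x y : leR op x y -> leLg op (st x) (st y).
Proof.
move=> /leRP[s Hx]; apply/leLP; exists (omap st s).
by rewrite -[Some (st x)]/(omap st (Some x)) Hx omap_st_omul.
Qed.

Lemma st_Lrel x y : Lrel op x y -> Rrel op (st x) (st y).
Proof. by case/andP=> xy yx; rewrite /Rrel !st_leL. Qed.

Lemma st_Rrel x y : Rrel op x y -> Lrel op (st x) (st y).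
Proof. by case/andP=> xy yx; rewrite /Lrel !st_leR. Qed.

Lemma st_LrelE x y : Lrel op (st x) (st y) = Rrel op x y.
Proof. by apply/idP/idP => [/st_Lrel|/st_Rrel //]; rewrite !stK. Qed.

Lemma st_Drel x y : Drel op x y -> Drel op (st x) (st y).
Proof.
apply: (Drel_ind (P := fun x y => Drel op (st x) (st y))) => [z|a b c /orP[] ab bc].
- exact: connect0.
- by apply: Drel_trans bc; apply: Lrel_Drel; apply: st_Rrel.
- by apply: Drel_trans bc; apply: Rrel_Drel; apply: st_Lrel.
Qed.
End Involution.

Section Classes.
Variables (S : finType) (op : S -> S -> S).
Hypothesis opA : forall x y z, op (op x y) z = op x (op y z).

Lemma dcl_memE (D : dcl op) z w : w \in val D -> (z \in val D) = Drel op w z.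
Proof.
case: D => _ /= /imsetP[x _ ->]; rewrite !inE => xw.
apply/idP/idP => [xz|]; last exact: Drel_trans.
by apply: Drel_trans xz; rewrite Drel_sym.
Qed.

Lemma dcl_eq (D1 D2 : dcl op) z : z \in val D1 -> z \in val D2 -> D1 = D2.
Proof.
by move=> z1 z2; apply/val_inj/setP => w; rewrite (dcl_memE w z1) (dcl_memE w z2).
Qed.

Lemma dcl_leJ (D : dcl op) x y : x \in val D -> y \in val D -> leJ op x y.
Proof. by move=> xD; rewrite (dcl_memE _ xD) => /(Drel_leJ opA)/andP[]. Qed.

Definition dcl_of (z : S) : dcl op :=
  exist (fun D => D \in dclasses op) [set y | Drel op z y] (imset_f _ (isT : z \in S)).

Lemma mem_dcl_of z : z \in val (dcl_of z).
Proof. by rewrite inE; apply: connect0. Qed.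

Lemma dle_trans (D1 D2 D3 : dcl op) :
  dle op (val D1) (val D2) -> dle op (val D2) (val D3) -> dle op (val D1) (val D3).
Proof.
case/existsP=> x1 /andP[x1D1 /existsP[y2 /andP[y2D2 x1y2]]].
case/existsP=> x2 /andP[x2D2 /existsP[y3 /andP[y3D3 x2y3]]].
have y2x2 := dcl_leJ y2D2 x2D2.
apply/existsP; exists x1; rewrite x1D1; apply/existsP; exists y3; rewrite y3D3 /=.
exact: (leJ_trans opA x1y2 (leJ_trans opA y2x2 x2y3)).
Qed.

Lemma dle_anti (D1 D2 : dcl op) :
  dle op (val D1) (val D2) -> dle op (val D2) (val D1) -> D1 = D2.
Proof.
case/existsP=> x1 /andP[x1D1 /existsP[y2 /andP[y2D2 x1y2]]].
case/existsP=> x2 /andP[x2D2 /existsP[y1 /andP[y1D1 x2y1]]].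
have y2x1 := leJ_trans opA (dcl_leJ y2D2 x2D2) (leJ_trans opA x2y1 (dcl_leJ y1D1 x1D1)).
suff y2D1 : y2 \in val D1 by apply: dcl_eq y2D1 y2D2.
by rewrite (dcl_memE _ x1D1) leJ_Drel.
Qed.

Lemma dlt_trans (D1 D2 D3 : dcl op) :
  dlt op (val D1) (val D2) -> dlt op (val D2) (val D3) -> dlt op (val D1) (val D3).
Proof.
case/andP=> D12 _ /andP[D23 D2D3]; rewrite /dlt (dle_trans D12 D23).
by apply: contra D2D3 => /eqP/val_inj D13; rewrite -D13 in D23 *; rewrite (dle_anti D12 D23).
Qed.

Lemma dlt_asym (D1 D2 : dcl op) : dlt op (val D1) (val D2) -> ~~ dlt op (val D2) (val D1).
Proof. by case/andP=> D12 D1D2; apply: contraNN D1D2 => /andP[/(dle_anti D12) ->]. Qed.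

Lemma lcl_memE (D : {set S}) (L : lcl op D) z w : w \in val L -> (z \in val L) = Lrel op w z.
Proof.
case: L => _ /= /imsetP[x _ ->]; rewrite !inE => xw.
apply/idP/idP => [xz|]; last exact: (Lrel_trans opA).
by apply: (Lrel_trans opA _ xz); rewrite Lrel_sym.
Qed.

Lemma lcl_eq (D : {set S}) (L1 L2 : lcl op D) z : z \in val L1 -> z \in val L2 -> L1 = L2.
Proof.
by move=> z1 z2; apply/val_inj/setP => w; rewrite (lcl_memE w z1) (lcl_memE w z2).
Qed.

Definition lcl_of (D : {set S}) z (zD : z \in D) : lcl op D :=
  exist (fun L => L \in lclasses_in op D) [set y | Lrel op z y] (imset_f _ zD).

Lemma mem_lcl_of (D : {set S}) z (zD : z \in D) : z \in val (lcl_of zD).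
Proof. by rewrite inE Lrel_refl. Qed.
End Classes.

(* Green's lemma: for an idempotent [e], [a L e] and [b R e], the map [g |-> a g b] is a
   bijection from [H_e] onto the [z] with [z R a] and [z L b]. *)
Section Eggbox.
Variables (S : finType) (op : S -> S -> S) (e : S).
Hypothesis opA : forall x y z, op (op x y) z = op x (op y z).
Hypothesis ee : op e e = e.
Local Notation "x ** y" := (omul op x y) (at level 40, left associativity).
Local Notation omulA := (omulA opA).

Let omul_Some x y : Some x ** Some y = Some (op x y). Proof. by []. Qed.

Let omul_Sl x a : exists y, Some y = Some x ** a.
Proof. by case: a => [a|]; eexists. Qed.

Lemma mul_idem_r x : leLg op x e -> op x e = x.
Proof.
move=> /leLP[s Hx]; apply: Some_inj.
by rewrite -omul_Some Hx -omulA /= ee.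
Qed.

Lemma mul_idem_l x : leR op x e -> op e x = x.
Proof.
move=> /leRP[s Hx]; apply: Some_inj.
by rewrite -omul_Some Hx omulA /= ee.
Qed.

Lemma hclass_idem g : g \in hclass op e ->
  [/\ op g e = g, op e g = g, Rrel op g e & Lrel op g e].
Proof.
rewrite inE => /andP[eg ge]; rewrite Rrel_sym in eg; rewrite Lrel_sym in ge.
by split => //; [apply: mul_idem_r; case/andP: ge | apply: mul_idem_l; case/andP: eg].
Qed.

Lemma hclass_inv g : g \in hclass op e -> exists g', op g' g = e /\ op g g' = e.
Proof.
move=> gH; have [ge eg /andP[_ /leRP[a Ha]] /andP[_ /leLP[b Hb]]] := hclass_idem gH.
have [g' Hg'] := omul_Sl e a.
have Hg'b : Some g' = b ** Some e by rewrite Hg' {1}Hb -omulA -Ha.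
exists g'; split; apply: Some_inj.
  by rewrite -omul_Some Hg'b -omulA /= eg -Hb.
by rewrite -omul_Some Hg' omulA omul_Some ge -Ha.
Qed.

Lemma sandwich_onto a b z : Lrel op a e -> Rrel op b e -> Rrel op z a -> Lrel op z b ->
  exists2 g, g \in hclass op e & z = op (op a g) b.
Proof.
case/andP=> aLe /leLP[d Hd]; case/andP=> bRe /leRP[c Hc].
case/andP=> /leRP[a1 Ha1] /leRP[a2 Ha2]; case/andP=> /leLP[b1 Hb1] /leLP[b2 Hb2].
have ae := mul_idem_r aLe; have eb := mul_idem_l bRe.
have [zc Hzc] := omul_Sl z c.
have [g Hg] : exists g, Some g = d ** (Some z ** c).
  by rewrite -Hzc; case: d {Hd} => [d|]; eexists.
have F1 : Some a ** (d ** Some z) = Some z.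
  by rewrite {1}Ha1 (omulA d) -Hd omulA omul_Some ae -Ha1.
have F2 : (Some z ** c) ** Some b = Some z.
  by rewrite {1}Hb1 -(omulA b1) -Hc -omulA omul_Some eb -Hb1.
exists g; last first.
  by apply: Some_inj; rewrite -!omul_Some Hg (omulA d) omulA F1 F2.
have F1x x : Some a ** (d ** (Some z ** x)) = Some z ** x by rewrite (omulA d) omulA F1.
have F2x x : Some z ** (c ** (Some b ** x)) = Some z ** x by rewrite omulA omulA F2.
rewrite inE /Hrel /Rrel /Lrel; apply/andP; split; apply/andP; split.
- by apply/leRP; exists (Some b ** a2); rewrite Hd Ha2 Hg -!omulA F2x.
- by apply/leRP; exists (Some g); rewrite Hg Hd -!omulA F1x.
- by apply/leLP; exists (b2 ** Some a); rewrite Hc Hb2 Hg -!omulA F1x.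
- by apply/leLP; exists (Some g); rewrite Hg Hc -!omulA F2x.
Qed.

Lemma sandwich_Lrel a b g : Lrel op a e -> Rrel op b e -> g \in hclass op e ->
  Lrel op (op (op a g) b) b.
Proof.
case/andP=> _ /leLP[d Hd] /andP[bRe _] gH.
have [_ eg _ _] := hclass_idem gH; have [g' [g'g _]] := hclass_inv gH.
apply/andP; split; first by apply/leLP; exists (Some (op a g)).
apply/leLP; exists (Some g' ** d).
have HdX x : d ** (Some a ** x) = Some e ** x by rewrite omulA -Hd.
have HegX x : Some e ** (Some g ** x) = Some g ** x by rewrite omulA omul_Some eg.
by rewrite -!omul_Some -!omulA HdX HegX omulA omul_Some g'g omul_Some (mul_idem_l bRe).
Qed.

Lemma sandwich_Rrel a b g : Lrel op a e -> Rrel op b e -> g \in hclass op e ->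
  Rrel op (op (op a g) b) a.
Proof.
case/andP=> aLe _ /andP[_ /leRP[c Hc]] gH.
have [ge _ _ _] := hclass_idem gH; have [g' [_ gg']] := hclass_inv gH.
apply/andP; split; first by apply/leRP; exists (Some (op g b)); rewrite omul_Some opA.
apply/leRP; exists (c ** Some g').
have HcX x : Some b ** (c ** x) = Some e ** x by rewrite omulA -Hc.
have HgeX x : Some g ** (Some e ** x) = Some g ** x by rewrite omulA omul_Some ge.
by rewrite -!omul_Some -!omulA HcX HgeX omul_Some gg' omul_Some (mul_idem_r aLe).
Qed.

Lemma sandwich_inj a b g1 g2 : Lrel op a e -> Rrel op b e ->
  g1 \in hclass op e -> g2 \in hclass op e -> op (op a g1) b = op (op a g2) b -> g1 = g2.
Proof.
case/andP=> _ /leLP[d Hd] /andP[_ /leRP[c Hc]] g1H g2H E.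
suff K g : g \in hclass op e -> d ** (Some (op (op a g) b) ** c) = Some g.
  by apply: Some_inj; rewrite -(K _ g1H) -(K _ g2H) E.
move=> gH; have [ge eg _ _] := hclass_idem gH.
have HdX x : d ** (Some a ** x) = Some e ** x by rewrite omulA -Hd.
have HegX x : Some e ** (Some g ** x) = Some g ** x by rewrite omulA omul_Some eg.
by rewrite -!omul_Some -!omulA HdX HegX -Hc omul_Some ge.
Qed.

Lemma mul_hclass_Lrel a g : Lrel op a e -> g \in hclass op e -> Lrel op (op a g) e.
Proof.
case/andP=> _ /leLP[d Hd] gH.
have [_ eg _ /andP[gLe _]] := hclass_idem gH; have [g' [g'g _]] := hclass_inv gH.
apply/andP; split.
  by apply: (leL_trans opA _ gLe); apply/leLP; exists (Some a).
apply/leLP; exists (Some g' ** d).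
by rewrite -omulA -omul_Some (omulA d) -Hd omul_Some eg omul_Some g'g.
Qed.
End Eggbox.

Section Blocks.
Variables (S : finType) (op : S -> S -> S) (st : S -> S).
Unset Implicit Arguments.
Variables (one : dcl op -> S) (u : forall D : dcl op, lcl op (val D) -> S).
Set Implicit Arguments.
Hypothesis opA : forall x y z, op (op x y) z = op x (op y z).
Hypothesis stK : involutive st.
Hypothesis stM : forall x y, st (op x y) = op (st y) (st x).
Hypothesis one_spec : forall D,
  [/\ one D \in val D, op (one D) (one D) = one D & st (one D) = one D].
Hypothesis u_spec : forall D (L : lcl op (val D)), u D L \in val L /\ Rrel op (u D L) (one D).

Definition ustar (D : dcl op) (L : lcl op (val D)) := st (u D L).

Definition block (D : dcl op) (L K : lcl op (val D)) g := op (op (ustar L) g) (u D K).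

Lemma one_idem (D : dcl op) : op (one D) (one D) = one D. Proof. by case: (one_spec D). Qed.

Lemma mem_dcl_Drel (D : dcl op) z : (z \in val D) = Drel op (one D) z.
Proof. by case: (one_spec D) => oneD _ _; apply: dcl_memE oneD. Qed.

Lemma u_Rrel (D : dcl op) (L : lcl op (val D)) : Rrel op (u D L) (one D).
Proof. by case: (u_spec L). Qed.

Lemma mem_lcl_Lrel (D : dcl op) (L : lcl op (val D)) z : (z \in val L) = Lrel op (u D L) z.
Proof. by case: (u_spec L) => uL _; exact: (lcl_memE opA _ uL). Qed.

Lemma ustar_Lrel (D : dcl op) (L : lcl op (val D)) : Lrel op (ustar L) (one D).
Proof. by case: (one_spec D) => _ _ stone; rewrite /ustar -stone st_LrelE // u_Rrel. Qed.

Lemma ustar_mem_dcl (D : dcl op) (L : lcl op (val D)) : ustar L \in val D.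
Proof. by rewrite mem_dcl_Drel; apply: Lrel_Drel; rewrite Lrel_sym ustar_Lrel. Qed.

Lemma st_mem_dcl (D : dcl op) z : z \in val D -> st z \in val D.
Proof. by case: (one_spec D) => _ _ stone; rewrite !mem_dcl_Drel -{2}stone; apply: st_Drel. Qed.

Lemma Rrel_ustar_lcl_of (D : dcl op) w (wD : w \in val D) :
  Rrel op w (ustar (lcl_of op (st_mem_dcl wD))).
Proof. by rewrite -(st_LrelE stK stM) /ustar stK Lrel_sym -mem_lcl_Lrel mem_lcl_of. Qed.

Lemma block_mem (D : dcl op) (L K : lcl op (val D)) g : g \in hclass op (one D) ->
  [/\ block L K g \in val D, block L K g \in val K & st (block L K g) \in val L].
Proof.
move=> gH.
have zR := sandwich_Rrel opA (one_idem D) (ustar_Lrel L) (u_Rrel K) gH.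
have zL := sandwich_Lrel opA (one_idem D) (ustar_Lrel L) (u_Rrel K) gH.
split.
- by rewrite (dcl_memE _ (ustar_mem_dcl L)) Rrel_Drel // Rrel_sym.
- by rewrite mem_lcl_Lrel Lrel_sym.
- by rewrite mem_lcl_Lrel Lrel_sym -(stK (u D L)); apply: st_Rrel.
Qed.

Lemma block_dcl_inj (D D' : dcl op) (L K : lcl op (val D)) (L' K' : lcl op (val D')) g g' :
  g \in hclass op (one D) -> g' \in hclass op (one D') ->
  block L K g = block L' K' g' -> D = D'.
Proof.
move=> gH g'H E; have [z1 _ _] := block_mem L K gH; have [z2 _ _] := block_mem L' K' g'H.
by rewrite E in z1; apply: dcl_eq z1 z2.
Qed.

Lemma block_inj (D : dcl op) (L K L' K' : lcl op (val D)) g g' :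
  g \in hclass op (one D) -> g' \in hclass op (one D) ->
  block L K g = block L' K' g' -> [/\ L = L', K = K' & g = g'].
Proof.
move=> gH g'H E; have [_ K1 L1] := block_mem L K gH; have [_ K2 L2] := block_mem L' K' g'H.
rewrite E in K1 L1; move: E; rewrite -(lcl_eq opA L1 L2) -(lcl_eq opA K1 K2) => E.
by split=> //; exact: (sandwich_inj opA (one_idem D) (ustar_Lrel L) (u_Rrel K) gH g'H E).
Qed.

Lemma block_decomposition z : exists D : dcl op, exists L K : lcl op (val D),
  exists2 g, g \in hclass op (one D) & z = block L K g.
Proof.
pose D := dcl_of op z; have zD : z \in val D by apply: mem_dcl_of.
exists D, (lcl_of op (st_mem_dcl zD)), (lcl_of op zD).
apply: (sandwich_onto opA (one_idem D) (ustar_Lrel _) (u_Rrel _)).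
  exact: Rrel_ustar_lcl_of.
by rewrite Lrel_sym -mem_lcl_Lrel mem_lcl_of.
Qed.

Lemma Lrel_decomposition (D : dcl op) w : Lrel op w (one D) ->
  exists L : lcl op (val D), exists2 h, h \in hclass op (one D) & w = op (ustar L) h.
Proof.
move=> wL; have wD : w \in val D by rewrite mem_dcl_Drel; apply: Lrel_Drel; rewrite Lrel_sym.
pose L := lcl_of op (st_mem_dcl wD).
have wR : Rrel op w (ustar L) := Rrel_ustar_lcl_of wD.
clearbody L; exists L.
have [h hH ->] := sandwich_onto opA (one_idem D) (ustar_Lrel L) (Rrel_refl op (one D)) wR wL.
have [ge _ _ _] := hclass_idem opA (one_idem D) hH.
by exists h; rewrite // opA ge.
Qed.

(* As [x u_L^* <=_L 1_D], stability shows that [x u_L^* y] J-equivalent to [1_D] would force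
   [x u_L^* L 1_D]. *)
Lemma mul_ustar_below (D : dcl op) (L : lcl op (val D)) x y :
  ~~ Lrel op (op x (ustar L)) (one D) ->
  op (op x (ustar L)) y \notin val D /\
  dle op (val (dcl_of op (op (op x (ustar L)) y))) (val D).
Proof.
have /andP[uLone _] := ustar_Lrel L.
have xuL : leLg op (op x (ustar L)) (one D).
  by apply: (leL_trans opA _ uLone); apply/leLP; exists (Some x).
move=> notL; split.
  apply: contra notL; rewrite mem_dcl_Drel => /(Drel_leJ opA)/andP[oneJ _].
  apply/andP; split => //; apply: (leL_stable opA xuL).
  by apply: (leJ_trans opA oneJ); apply: leR_leJ; apply/leRP; exists (Some y).
apply/existsP; exists (op (op x (ustar L)) y); rewrite mem_dcl_of.
apply/existsP; exists (ustar L); rewrite ustar_mem_dcl /=.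
by apply/leJP; exists (Some x), (Some y).
Qed.
End Blocks.

Local Open Scope ring_scope.

Section TwistedAlgebra.
Variables (R : comPzRingType) (S : finType) (op : S -> S -> S) (alpha : S -> S -> R)
  (st : S -> S).
Hypothesis opA : forall x y z, op (op x y) z = op x (op y z).
Hypothesis alpha_cocycle :
  forall x y z, alpha x y * alpha (op x y) z = alpha x (op y z) * alpha y z.
Hypothesis stK : involutive st.
Hypothesis stM : forall x y, st (op x y) = op (st y) (st x).
Hypothesis alpha_st : forall x y, alpha x y = alpha (st y) (st x).

Local Notation V := {ffun S -> R^o}.
Local Notation td := (@tdelta R S).
Local Notation mul := (tmul op alpha).
Local Notation star := (@tstar R S st).

Let scale_regularE (k x : R) : k *: (x : R^o) = k * x. Proof. by []. Qed.

Lemma tdeltaE x z : td x z = (z == x)%:R.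
Proof. by rewrite ffunE. Qed.

Lemma tdelta_expand (f : V) : f = \sum_x f x *: td x.
Proof.
apply/ffunP=> z; rewrite sum_ffunE (bigD1 z) //= big1 => [|y yz].
  by rewrite !ffunE eqxx scale_regularE mulr1 addr0.
by rewrite !ffunE eq_sym (negbTE yz) scale_regularE mulr0.
Qed.

Lemma tmulE (f g : V) : mul f g = \sum_x \sum_y (f x * g y * alpha x y) *: td (op x y).
Proof.
apply/ffunP=> z; rewrite ffunE sum_ffunE; apply: eq_bigr => x _.
rewrite sum_ffunE; apply: eq_bigr => y _.
by rewrite !ffunE eq_sym scale_regularE; case: eqP; rewrite ?mulr1 ?mulr0.
Qed.

Lemma tmulDl (f g h : V) : mul (f + g) h = mul f h + mul g h.
Proof.
rewrite !tmulE -big_split; apply: eq_bigr => x _; rewrite -big_split.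
by apply: eq_bigr => y _; rewrite !ffunE !mulrDl scalerDl.
Qed.

Lemma tmulDr (f g h : V) : mul h (f + g) = mul h f + mul h g.
Proof.
rewrite !tmulE -big_split; apply: eq_bigr => x _; rewrite -big_split.
by apply: eq_bigr => y _; rewrite !ffunE !mulrDr !mulrDl scalerDl.
Qed.

Lemma tmulZl k (f g : V) : mul (k *: f) g = k *: mul f g.
Proof.
rewrite !tmulE scaler_sumr; apply: eq_bigr => x _; rewrite scaler_sumr.
by apply: eq_bigr => y _; rewrite !ffunE scalerA !mulrA.
Qed.

Lemma tmulZr k (f g : V) : mul g (k *: f) = k *: mul g f.
Proof.
rewrite !tmulE scaler_sumr; apply: eq_bigr => x _; rewrite scaler_sumr.
by apply: eq_bigr => y _; rewrite !ffunE scalerA mulrCA !mulrA.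
Qed.

Lemma tmul0l (g : V) : mul 0 g = 0.
Proof.
by rewrite tmulE big1 // => x _; rewrite big1 // => y _; rewrite ffunE !mul0r scale0r.
Qed.

Lemma tmul0r (g : V) : mul g 0 = 0.
Proof.
by rewrite tmulE big1 // => x _; rewrite big1 // => y _; rewrite ffunE mulr0 mul0r scale0r.
Qed.

Lemma tmul_suml I (r : seq I) (P : pred I) (F : I -> V) g :
  mul (\sum_(i <- r | P i) F i) g = \sum_(i <- r | P i) mul (F i) g.
Proof.
by elim/big_rec2: _ => [|i a b _ <-]; [exact: tmul0l|exact: tmulDl].
Qed.

Lemma tmul_sumr I (r : seq I) (P : pred I) (F : I -> V) g :
  mul g (\sum_(i <- r | P i) F i) = \sum_(i <- r | P i) mul g (F i).
Proof.
by elim/big_rec2: _ => [|i a b _ <-]; [exact: tmul0r|exact: tmulDr].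
Qed.

Lemma tmul_tdelta x y : mul (td x) (td y) = alpha x y *: td (op x y).
Proof.
rewrite tmulE (bigD1 x) //= [X in _ + X]big1 => [|x' x'x]; last first.
  by rewrite big1 // => y' _; rewrite !tdeltaE (negbTE x'x) !mul0r scale0r.
rewrite addr0 (bigD1 y) //= [X in _ + X]big1 => [|y' y'y].
  by rewrite !tdeltaE !eqxx addr0 !mul1r.
by rewrite !tdeltaE (negbTE y'y) mulr0 mul0r scale0r.
Qed.

Lemma tmulA (f g h : V) : mul (mul f g) h = mul f (mul g h).
Proof.
rewrite [f]tdelta_expand [g]tdelta_expand [h]tdelta_expand !tmul_suml.
apply: eq_bigr => x _; rewrite [mul _ (\sum_y g y *: td y)]tmul_sumr tmul_suml tmul_sumr.
apply: eq_bigr => y _; rewrite !tmul_sumr; apply: eq_bigr => z _.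
rewrite !(tmulZl, tmulZr, tmul_tdelta) !scalerA opA; congr (_ *: _).
rewrite -!mulrA alpha_cocycle [alpha x _ * _]mulrC !mulrA; congr (_ * _ * _).
by rewrite [RHS]mulrC mulrA.
Qed.

Lemma tstar_tdelta x : star (td x) = td (st x).
Proof.
rewrite /tstar (bigD1 x) //= big1 => [|y yx]; first by rewrite tdeltaE eqxx scale1r addr0.
by rewrite tdeltaE (negbTE yx) scale0r.
Qed.

Lemma tstarD (f g : V) : star (f + g) = star f + star g.
Proof. by rewrite /tstar -big_split; apply: eq_bigr => x _; rewrite ffunE scalerDl. Qed.

Lemma tstarZ k (f : V) : star (k *: f) = k *: star f.
Proof. by rewrite /tstar scaler_sumr; apply: eq_bigr => x _; rewrite ffunE scalerA. Qed.

Lemma tstar_sum I (r : seq I) (P : pred I) (F : I -> V) :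
  star (\sum_(i <- r | P i) F i) = \sum_(i <- r | P i) star (F i).
Proof.
elim/big_rec2: _ => [|i a b _ <-]; last exact: tstarD.
by rewrite /tstar big1 // => x _; rewrite ffunE scale0r.
Qed.

Lemma tstarK (f : V) : star (star f) = f.
Proof.
rewrite {2}(tdelta_expand f) {2}/tstar tstar_sum; apply: eq_bigr => x _.
by rewrite tstarZ tstar_tdelta stK.
Qed.

Lemma tstarM (f g : V) : star (mul f g) = mul (star g) (star f).
Proof.
rewrite [f]tdelta_expand [g]tdelta_expand tmul_suml !tstar_sum tmul_sumr.
apply: eq_bigr => x _; rewrite tmul_sumr tstar_sum tmul_suml; apply: eq_bigr => y _.
rewrite !(tmulZl, tmulZr, tstarZ, tmul_tdelta, tstar_tdelta).
by rewrite stM alpha_st !scalerA [g y * _]mulrC.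
Qed.
End TwistedAlgebra.

Section CellBasis.
Unset Implicit Arguments.
Variables (R : comPzRingType) (S : finType) (op : S -> S -> S)
  (st : S -> S) (alpha : S -> S -> R)
  (Lam : dcl op -> finType) (leL : forall D, Lam D -> Lam D -> Prop)
  (M : forall D, Lam D -> finType)
  (C : forall D (l : Lam D), M D l -> M D l -> {ffun S -> R^o})
  (one : dcl op -> S) (u : forall D : dcl op, lcl op (val D) -> S).
Set Implicit Arguments.
Hypothesis opA : forall x y z, op (op x y) z = op x (op y z).
Hypothesis stK : involutive st.
Hypothesis stM : forall x y, st (op x y) = op (st y) (st x).
Hypothesis alpha_cocycle :
  forall x y z, alpha x y * alpha (op x y) z = alpha x (op y z) * alpha y z.
Hypothesis alpha_st : forall x y, alpha x y = alpha (st y) (st x).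
Hypothesis one_spec : forall D,
  [/\ one D \in val D, op (one D) (one D) = one D & st (one D) = one D].
Hypothesis alpha_unit : forall D x y, Lrel op x (one D) -> Rrel op y (one D) ->
  exists r, alpha x y * r = 1.
Hypothesis C_cellular : forall D, cellular
  (fun f : {ffun S -> R^o} => forall z, z \notin hclass op (one D) -> f z = 0)
  (tmul op alpha) (tstar st) (leL D) (C D).
Hypothesis u_spec : forall D (L : lcl op (val D)), u D L \in val L /\ Rrel op (u D L) (one D).

Local Notation V := {ffun S -> R^o}.
Local Notation mul := (tmul op alpha).
Local Notation star := (@tstar R S st).
Local Notation td := (@tdelta R S).
Local Notation ustar := (ustar st u).
Local Notation block := (block st u).
Local Notation bigI := {D : dcl op & Lam D}.
Local Notation bM := (bigM M).
Local Notation bC := (bigC alpha st C u).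
Local Notation bCp p := (@bigC R S op alpha st Lam M C u p).
Local Notation tmulA := (tmulA opA alpha_cocycle).

Definition hsupp (D : dcl op) (f : V) := forall z, z \notin hclass op (one D) -> f z = 0.

Lemma C_hsupp D l s t : hsupp D (C D l s t).
Proof. by case: (C_cellular D) => [[_ + _ _] _ _]; apply. Qed.

Lemma C_span D v : hsupp D v -> exists c, v = lincomb (C D) c.
Proof. by case: (C_cellular D) => [[_ _ + _] _ _]; apply. Qed.

Lemma C_free D c1 c2 :
  lincomb (C D) c1 = lincomb (C D) c2 -> forall l s t, c1 l s t = c2 l s t.
Proof. by case: (C_cellular D) => [[_ _ _ +] _ _]; apply. Qed.

Lemma C_star D l s t : star (C D l s t) = C D l t s.
Proof. by case: (C_cellular D) => [_ [_ _ _ _ +] _]; apply. Qed.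

Lemma C_C3 D (l : Lam D) (s : M D l) a : hsupp D a ->
  exists r : M D l -> R, forall t : M D l,
    exists c : forall m, M D m -> M D m -> R,
      (forall m s'' t'', ~ (leL D m l /\ m <> l) -> c m s'' t'' = 0) /\
      mul a (C D l s t) - \sum_(s' : M D l) r s' *: C D l s' t = lincomb (C D) c.
Proof. by case: (C_cellular D) => [_ _ +]; apply. Qed.

Lemma leL_order D : [/\ (forall l, leL D l l),
  (forall l m, leL D l m -> leL D m l -> l = m) &
  (forall l m n, leL D l m -> leL D m n -> leL D l n)].
Proof. by case: (C_cellular D) => [[] ]. Qed.

Lemma hsupp_tdelta D g : g \in hclass op (one D) -> hsupp D (td g).
Proof. by move=> gH z zH; rewrite tdeltaE; case: eqP => // zg; rewrite zg gH in zH. Qed.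

Lemma hsupp_lincomb D c : hsupp D (lincomb (C D) c).
Proof.
move=> z zH; rewrite !sum_ffunE big1 // => l _; rewrite sum_ffunE big1 // => s _.
by rewrite sum_ffunE big1 // => t _; rewrite ffunE C_hsupp // scaler0.
Qed.

Definition tsandwich (D : dcl op) (L K : lcl op (val D)) (f : V) : V :=
  mul (mul (td (ustar L)) f) (td (u D K)).

Lemma bigCE (p : bigI) (x y : bM p) :
  bCp p x y = tsandwich x.1 y.1 (C (tag p) (tagged p) x.2 y.2).
Proof. by []. Qed.

Section Tsandwich.
Variables (D : dcl op) (L K : lcl op (val D)).

Lemma tsandwichD f g : tsandwich L K (f + g) = tsandwich L K f + tsandwich L K g.
Proof. by rewrite /tsandwich tmulDr tmulDl. Qed.

Lemma tsandwichZ k f : tsandwich L K (k *: f) = k *: tsandwich L K f.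
Proof. by rewrite /tsandwich tmulZr tmulZl. Qed.

Lemma tsandwichB f g : tsandwich L K (f - g) = tsandwich L K f - tsandwich L K g.
Proof. by rewrite tsandwichD -scaleN1r tsandwichZ scaleN1r. Qed.

Lemma tsandwich_sum I (r : seq I) (P : pred I) (F : I -> V) :
  tsandwich L K (\sum_(i <- r | P i) F i) = \sum_(i <- r | P i) tsandwich L K (F i).
Proof.
elim/big_rec2: _ => [|i a b _ <-]; last exact: tsandwichD.
by rewrite -(scale0r 0) tsandwichZ !scale0r.
Qed.

Definition block_coef g := alpha (ustar L) g * alpha (op (ustar L) g) (u D K).

Lemma tsandwich_tdelta g : tsandwich L K (td g) = block_coef g *: td (block L K g).
Proof. by rewrite /tsandwich !(tmul_tdelta, tmulZl) scalerA. Qed.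

Lemma block_coef_unit g : g \in hclass op (one D) -> exists r, block_coef g * r = 1.
Proof.
move=> gH; have [_ _ gR _] := hclass_idem opA (one_idem one_spec D) gH.
have uL := ustar_Lrel stK stM one_spec u_spec L.
have [r1 r1E] := alpha_unit uL gR.
have [r2 r2E] := alpha_unit (mul_hclass_Lrel opA (one_idem one_spec D) uL gH) (u_Rrel u_spec K).
by exists (r1 * r2); rewrite /block_coef mulrACA r1E r2E mulr1.
Qed.

Lemma tsandwichE f z :
  tsandwich L K f z = \sum_h f h * block_coef h * (z == block L K h)%:R.
Proof.
rewrite {1}(tdelta_expand f) tsandwich_sum sum_ffunE; apply: eq_bigr => h _.
by rewrite tsandwichZ tsandwich_tdelta scalerA ffunE tdeltaE.
Qed.

Lemma tsandwich_supp f z : hsupp D f -> tsandwich L K f z != 0 ->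
  exists2 h, h \in hclass op (one D) & z = block L K h.
Proof.
rewrite tsandwichE => fD nz.
have /existsP[h nzh] : [exists h, f h * block_coef h * (z == block L K h)%:R != 0].
  apply: contraNT nz => /existsPn fz0; apply/eqP.
  by rewrite big1 // => h _; move: (fz0 h); rewrite negbK => /eqP.
exists h; first by move: nzh; apply: contraTT => /fD ->; rewrite !mul0r eqxx.
by move: nzh; case: (z =P block L K h) => // _; rewrite mulr0 eqxx.
Qed.

Lemma tsandwich_block f g : hsupp D f -> g \in hclass op (one D) ->
  tsandwich L K f (block L K g) = f g * block_coef g.
Proof.
move=> fD gH; rewrite tsandwichE (bigD1 g) //= eqxx mulr1 big1 ?addr0 // => h hg.
have [hH|/fD ->] := boolP (h \in hclass op (one D)); last by rewrite !mul0r.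
case: eqP => [E|]; last by rewrite mulr0.
have [_ _ gh] := block_inj opA stK stM one_spec u_spec gH hH E.
by rewrite gh eqxx in hg.
Qed.
End Tsandwich.

Definition spanned_on (P : bigI -> Prop) (v : V) :=
  exists c : forall m : bigI, bM m -> bM m -> R,
    (forall m x y, ~ P m -> c m x y = 0) /\ v = lincomb bC c.

Section SpannedOn.
Variable P : bigI -> Prop.

Lemma spanned_on0 : spanned_on P 0.
Proof.
exists (fun _ _ _ => 0); split => //; rewrite /lincomb big1 // => m _.
by rewrite big1 // => x _; rewrite big1 // => y _; rewrite scale0r.
Qed.

Lemma spanned_onD v w : spanned_on P v -> spanned_on P w -> spanned_on P (v + w).
Proof.
move=> [c [c0 ->]] [d [d0 ->]]; exists (fun m x y => c m x y + d m x y); split.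
  by move=> m x y nP; rewrite c0 // d0 // addr0.
rewrite /lincomb -big_split; apply: eq_bigr => m _.
rewrite -big_split; apply: eq_bigr => x _; rewrite -big_split; apply: eq_bigr => y _.
by rewrite scalerDl.
Qed.

Lemma spanned_onZ k v : spanned_on P v -> spanned_on P (k *: v).
Proof.
move=> [c [c0 ->]]; exists (fun m x y => k * c m x y); split.
  by move=> m x y nP; rewrite c0 // mulr0.
rewrite /lincomb scaler_sumr; apply: eq_bigr => m _.
rewrite scaler_sumr; apply: eq_bigr => x _; rewrite scaler_sumr; apply: eq_bigr => y _.
by rewrite scalerA.
Qed.

Lemma spanned_on_sum I (r : seq I) (Q : pred I) (F : I -> V) :
  (forall i, Q i -> spanned_on P (F i)) -> spanned_on P (\sum_(i <- r | Q i) F i).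
Proof.
move=> FP; elim/big_rec: _ => [|i v Qi vP]; first exact: spanned_on0.
by apply: spanned_onD => //; apply: FP.
Qed.

Lemma spanned_on_bigC (p : bigI) (x y : bM p) : P p -> spanned_on P (bCp p x y).
Proof.
pose T := {m : bigI & (bM m * bM m)%type}.
pose c m (x' y' : bM m) : R := ((Tagged _ (x', y') : T) == Tagged _ (x, y))%:R.
have c_tag m x' y' : c m x' y' != 0 -> m = p /\ Tagged _ (x', y') = Tagged _ (x, y) :> T.
  rewrite /c; case: (@eqP T) => [E _|]; last by rewrite /= mulr0n eqxx.
  by split; [exact: (congr1 (fun w : T => tag w) E)|exact: E].
move=> Pp; exists c; split.
  move=> m x' y' nPm; case: (eqVneq (c m x' y') 0) => // /c_tag[mp _].
  by case: nPm; rewrite mp.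
rewrite /lincomb (bigD1 p) //= [X in _ + X]big1 => [|m mp]; last first.
  rewrite big1 // => x' _; rewrite big1 // => y' _.
  case: (eqVneq (c m x' y') 0) => [->|/c_tag[/eqP]]; first by rewrite scale0r.
  by rewrite (negbTE mp).
rewrite addr0 (bigD1 x) //= [X in _ + X]big1 => [|x' x'x]; last first.
  rewrite big1 // => y' _; case: (eqVneq (c p x' y') 0) => [->|]; first by rewrite scale0r.
  case/c_tag=> _ E; have /= ex := congr1 fst (eq_from_Tagged E).
  by rewrite ex eqxx in x'x.
rewrite addr0 (bigD1 y) //= [X in _ + X]big1 => [|y' y'y]; last first.
  case: (eqVneq (c p x y') 0) => [->|]; first by rewrite scale0r.
  case/c_tag=> _ E; have /= ey := congr1 snd (eq_from_Tagged E).
  by rewrite ey eqxx in y'y.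
by rewrite /c eqxx scale1r addr0.
Qed.
End SpannedOn.

Lemma tdelta_spanned_on P (D : dcl op) z : z \in val D ->
  (forall l : Lam D, P (Tagged Lam l)) -> spanned_on P (td z).
Proof.
move=> zD PD.
have [D' [L [K [g gH zE]]]] := block_decomposition opA stK stM one_spec u_spec z.
have [zD' _ _] := block_mem opA stK stM one_spec u_spec L K gH; rewrite -zE in zD'.
have eD := dcl_eq zD' zD; subst D'.
have [r rE] := block_coef_unit L K gH.
have -> : td z = r *: tsandwich L K (td g).
  by rewrite tsandwich_tdelta scalerA mulrC rE scale1r zE.
apply: spanned_onZ; have [c ->] := C_span (hsupp_tdelta gH).
rewrite !tsandwich_sum; apply: spanned_on_sum => l _; rewrite tsandwich_sum.
apply: spanned_on_sum => s _; rewrite tsandwich_sum; apply: spanned_on_sum => t _.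
by rewrite tsandwichZ; apply/spanned_onZ/(spanned_on_bigC (p := Tagged Lam l) (L, s) (K, t)).
Qed.

Lemma bigM_sum (D : dcl op) (l : Lam D) (F : bM (Tagged Lam l) -> V) :
  \sum_(x : bM (Tagged Lam l)) F x = \sum_(L : lcl op (val D)) \sum_(s : M D l) F (L, s).
Proof. by rewrite pair_big; apply: eq_bigr => -[]. Qed.

Lemma lincomb_bigC (c : forall m : bigI, bM m -> bM m -> R) :
  lincomb bC c = \sum_(D : dcl op) \sum_(L : lcl op (val D)) \sum_(K : lcl op (val D))
     tsandwich L K (lincomb (C D) (fun l s t => c (Tagged Lam l) (L, s) (K, t))).
Proof.
pose G D (l : Lam D) := \sum_(x : bM (Tagged Lam l)) \sum_(y : bM (Tagged Lam l))
  c (Tagged Lam l) x y *: bCp (Tagged Lam l) x y.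
rewrite /lincomb (eq_bigr (fun p => G (tag p) (tagged p))); last by case.
have -> : \sum_(p : bigI) G (tag p) (tagged p) = \sum_D \sum_(l : Lam D) G D l.
  by rewrite (sig_big_dep xpredT (fun _ => xpredT) G).
apply: eq_bigr => D _.
transitivity (\sum_(l : Lam D) \sum_(L : lcl op (val D)) \sum_(K : lcl op (val D))
    \sum_(s : M D l) \sum_(t : M D l) c (Tagged Lam l) (L, s) (K, t) *: tsandwich L K (C D l s t)).
  apply: eq_bigr => l _; rewrite /G bigM_sum; apply: eq_bigr => L _.
  by under eq_bigr => s _ do rewrite bigM_sum; rewrite exchange_big.
rewrite exchange_big; apply: eq_bigr => L _; rewrite exchange_big; apply: eq_bigr => K _.
rewrite tsandwich_sum; apply: eq_bigr => l _; rewrite tsandwich_sum; apply: eq_bigr => s _.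
by rewrite tsandwich_sum; apply: eq_bigr => t _; rewrite tsandwichZ.
Qed.

(* Blocks of different (D, L, K) are disjoint, so evaluating at a point of the block
   (D0, L0, K0) isolates a single summand. *)
Lemma tsandwich_sum_block (F : forall D : dcl op, lcl op (val D) -> lcl op (val D) -> V)
  (D0 : dcl op) (L0 K0 : lcl op (val D0)) g :
  (forall D L K, hsupp D (F D L K)) -> g \in hclass op (one D0) ->
  (\sum_(D : dcl op) \sum_(L : lcl op (val D)) \sum_(K : lcl op (val D))
      tsandwich L K (F D L K)) (block L0 K0 g) = F D0 L0 K0 g * block_coef L0 K0 g.
Proof.
move=> FD gH.
have hit D (L K : lcl op (val D)) : tsandwich L K (F D L K) (block L0 K0 g) != 0 ->
    exists2 h, h \in hclass op (one D) & block L K h = block L0 K0 g.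
  by case/(tsandwich_supp (FD D L K)) => h hH E; exists h.
rewrite sum_ffunE (bigD1 D0) //= [X in _ + X]big1 => [|D DD0]; last first.
  rewrite sum_ffunE big1 // => L _; rewrite sum_ffunE big1 // => K _.
  apply/eqP; apply: contraNT DD0 => /hit[h hH E]; apply/eqP.
  exact: (block_dcl_inj opA stK stM one_spec u_spec hH gH E).
rewrite addr0 sum_ffunE (bigD1 L0) //= [X in _ + X]big1 => [|L LL0]; last first.
  rewrite sum_ffunE big1 // => K _; apply/eqP; apply: contraNT LL0 => /hit[h hH E].
  by case: (block_inj opA stK stM one_spec u_spec hH gH E) => ->.
rewrite addr0 sum_ffunE (bigD1 K0) //= [X in _ + X]big1 => [|K KK0]; last first.
  apply/eqP; apply: contraNT KK0 => /hit[h hH E].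
  by case: (block_inj opA stK stM one_spec u_spec hH gH E) => _ ->.
by rewrite addr0 tsandwich_block.
Qed.

Lemma lincomb_bigC_free (c : forall m : bigI, bM m -> bM m -> R) :
  lincomb bC c = 0 -> forall p x y, c p x y = 0.
Proof.
pose F D (L K : lcl op (val D)) := lincomb (C D) (fun l s t => c (Tagged Lam l) (L, s) (K, t)).
have FD D L K : hsupp D (F D L K) by apply: hsupp_lincomb.
rewrite lincomb_bigC => c0.
have F0 D L K : F D L K = 0.
  apply/ffunP => g; rewrite ffunE.
  have [gH|/FD //] := boolP (g \in hclass op (one D)).
  have [r rE] := block_coef_unit L K gH.
  have := tsandwich_sum_block L K FD gH; rewrite c0 ffunE => /esym Fg.
  by rewrite -[F D L K g]mulr1 -rE mulrA Fg mul0r.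
case=> D l [L s] [K t].
have := C_free (c1 := fun l s t => c (Tagged Lam l) (L, s) (K, t)) (c2 := fun _ _ _ => 0).
apply=> //; rewrite -/(F D L K) F0 /lincomb big1 // => m _.
by rewrite big1 // => s' _; rewrite big1 // => t' _; rewrite scale0r.
Qed.

Definition strictly_below (p m : bigI) := bigle leL m p /\ m <> p.

Definition C3_at (p : bigI) (s : bM p) (a : V) :=
  exists r : bM p -> R, forall t : bM p,
    spanned_on (strictly_below p) (mul a (bCp p s t) - \sum_(s' : bM p) r s' *: bCp p s' t).

Section C3.
Variables (p : bigI) (s : bM p).

Lemma C3_at0 : C3_at s 0.
Proof.
exists (fun _ => 0) => t; rewrite big1 => [|s' _]; last by rewrite scale0r.
by rewrite subr0 tmul0l; apply: spanned_on0.
Qed.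

Lemma C3_atD a b : C3_at s a -> C3_at s b -> C3_at s (a + b).
Proof.
move=> [ra ra_ok] [rb rb_ok]; exists (fun s' => ra s' + rb s') => t.
suff -> : mul (a + b) (bCp p s t) - \sum_s' (ra s' + rb s') *: bCp p s' t =
    (mul a (bCp p s t) - \sum_s' ra s' *: bCp p s' t) +
    (mul b (bCp p s t) - \sum_s' rb s' *: bCp p s' t) by apply: spanned_onD.
under eq_bigr => s' _ do rewrite scalerDl.
by rewrite tmulDl big_split /= opprD addrACA.
Qed.

Lemma C3_atZ k a : C3_at s a -> C3_at s (k *: a).
Proof.
move=> [r r_ok]; exists (fun s' => k * r s') => t.
suff -> : mul (k *: a) (bCp p s t) - \sum_s' (k * r s') *: bCp p s' t =
    k *: (mul a (bCp p s t) - \sum_s' r s' *: bCp p s' t) by apply: spanned_onZ.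
under eq_bigr => s' _ do rewrite -scalerA.
by rewrite tmulZl scalerBr scaler_sumr.
Qed.

Lemma C3_at_sum I (r : seq I) (Q : pred I) (F : I -> V) :
  (forall i, Q i -> C3_at s (F i)) -> C3_at s (\sum_(i <- r | Q i) F i).
Proof.
move=> FC3; elim/big_rec: _ => [|i v Qi vC3]; first exact: C3_at0.
by apply: C3_atD => //; apply: FC3.
Qed.
End C3.

Lemma tmul_tsandwich D (L K : lcl op (val D)) x f :
  mul (td x) (tsandwich L K f) =
  alpha x (ustar L) *: mul (mul (td (op x (ustar L))) f) (td (u D K)).
Proof. by rewrite /tsandwich -!tmulA tmul_tdelta !tmulZl. Qed.

Lemma strictly_below_tag D (m l : Lam D) :
  leL D m l -> m <> l -> strictly_below (Tagged Lam l) (Tagged Lam m).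
Proof.
move=> ml neq_ml; split; first by right; exists D, m, l.
by move=> E; apply: neq_ml; apply: eq_from_Tagged E.
Qed.

Lemma tsandwich_spanned_below D (l : Lam D) (L K : lcl op (val D)) c :
  (forall m s t, ~ (leL D m l /\ m <> l) -> c m s t = 0) ->
  spanned_on (strictly_below (Tagged Lam l)) (tsandwich L K (lincomb (C D) c)).
Proof.
move=> c0; rewrite !tsandwich_sum; apply: spanned_on_sum => m _.
rewrite tsandwich_sum; apply: spanned_on_sum => s _.
rewrite tsandwich_sum; apply: spanned_on_sum => t _; rewrite tsandwichZ.
have [[ml neq_ml]|nml] := classic (leL D m l /\ m <> l).
  by apply/spanned_onZ/(spanned_on_bigC (p := Tagged Lam m) (L, s) (K, t))/strictly_below_tag.
by rewrite c0 // scale0r; apply: spanned_on0.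
Qed.

(* If [x u_L^* = u_L'^* h] with [h] in [G_D], then [x . C_{(L,s),(K,t)}] is
   [u_L'^* . (h . C_st) . u_K] up to a scalar, and (C3) for [G_D] applies to [h . C_st]. *)
Lemma C3_at_tdelta_Lrel D (l : Lam D) (L : lcl op (val D)) (s : M D l) x :
  Lrel op (op x (ustar L)) (one D) -> C3_at (p := Tagged Lam l) (L, s) (td x).
Proof.
move=> xuL.
have [L' [h hH xuLE]] := Lrel_decomposition opA stK stM one_spec u_spec xuL.
have [_ _ hR _] := hclass_idem opA (one_idem one_spec D) hH.
have [r1 r1E] := alpha_unit (ustar_Lrel stK stM one_spec u_spec L') hR.
pose k := alpha x (ustar L) * r1.
have tdxuL : td (op x (ustar L)) = r1 *: mul (td (ustar L')) (td h).
  by rewrite tmul_tdelta scalerA mulrC r1E scale1r xuLE.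
have [rh rh_ok] := C_C3 s (hsupp_tdelta hH).
exists (fun s' : bM (Tagged Lam l) => if s'.1 == L' then k * rh s'.2 else 0) => -[K t].
have [c [c0 cE]] := rh_ok t.
suff -> : mul (td x) (bCp (Tagged Lam l) (L, s) (K, t)) -
    \sum_(s' : bM (Tagged Lam l)) (if s'.1 == L' then k * rh s'.2 else 0) *:
      bCp (Tagged Lam l) s' (K, t) = k *: tsandwich L' K (lincomb (C D) c).
  by apply/spanned_onZ/tsandwich_spanned_below.
rewrite -cE tsandwichB tsandwich_sum scalerBr scaler_sumr; congr (_ - _).
  by rewrite bigCE tmul_tsandwich tdxuL !tmulZl scalerA /tsandwich !tmulA.
rewrite bigM_sum (bigD1 L') //= [X in _ + X]big1 => [|L'' neq_L''].
  by rewrite addr0; apply: eq_bigr => s' _; rewrite eqxx tsandwichZ scalerA.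
by rewrite big1 // => s' _; rewrite (negbTE neq_L'') scale0r.
Qed.

(* Otherwise every [x . u_L^* . g . u_K] lies in a D-class strictly below [D]. *)
Lemma C3_at_tdelta_below D (l : Lam D) (L : lcl op (val D)) (s : M D l) x :
  ~~ Lrel op (op x (ustar L)) (one D) -> C3_at (p := Tagged Lam l) (L, s) (td x).
Proof.
move=> xuL; exists (fun _ => 0) => -[K t].
rewrite big1 => [|s' _]; last by rewrite scale0r.
rewrite subr0 bigCE tmul_tsandwich; apply: spanned_onZ.
rewrite [C D l s t]tdelta_expand tmul_sumr tmul_suml; apply: spanned_on_sum => g _.
rewrite !(tmulZr, tmulZl, tmul_tdelta); do 3 apply: spanned_onZ.
have [zD zD_le] := mul_ustar_below opA stK stM one_spec u_spec (op g (u D K)) xuL.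
rewrite -opA in zD zD_le; set z := op (op (op x (ustar L)) g) (u D K) in zD zD_le *.
apply: (tdelta_spanned_on (D := dcl_of op z)); first exact: mem_dcl_of.
have neq_zD : dcl_of op z <> D by move=> zDE; move: (mem_dcl_of op z); rewrite zDE; apply/negP.
move=> l'; split; last by move=> E; apply: neq_zD; apply: (congr1 (@tag _ _) E).
by left; rewrite /dlt zD_le andTb; apply/eqP => E; apply: neq_zD; apply: val_inj E.
Qed.

Lemma C3_at_tdelta (p : bigI) (s : bM p) x : C3_at s (td x).
Proof.
case: p s => D l [L s].
have [xuL|xuL] := boolP (Lrel op (op x (ustar L)) (one D)).
  exact: C3_at_tdelta_Lrel.
exact: C3_at_tdelta_below.
Qed.

Lemma bigle_order : [/\ (forall p, bigle leL p p),
  (forall p q, bigle leL p q -> bigle leL q p -> p = q) &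
  (forall p q r, bigle leL p q -> bigle leL q r -> bigle leL p r)].
Proof.
have dlt_irr (D : dcl op) : ~~ dlt op (val D) (val D) by rewrite /dlt eqxx andbF.
split.
- by case=> D l; right; exists D, l, l; split=> //; case: (leL_order D).
- move=> p q [pq|[D [l1 [l2 [-> -> l12]]]]] [qp|[D' [l3 [l4 [E3 E4 l34]]]]].
  + by move: (dlt_asym opA pq); rewrite qp.
  + by move: pq; rewrite E3 E4 /= (negbTE (dlt_irr D')).
  + by move: qp; rewrite /= (negbTE (dlt_irr D)).
  + have eD : D = D' by have := f_equal (@tag _ _) E3.
    subst D'; have e23 := eq_from_Tagged E3; have e14 := eq_from_Tagged E4; subst l3 l4.
    by case: (leL_order D) => _ anti _; rewrite (anti _ _ l12 l34).
- move=> p q r [pq|[D [l1 [l2 [-> -> l12]]]]] [qr|[D' [l3 [l4 [E3 E4 l34]]]]].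
  + by left; apply: (dlt_trans opA pq qr).
  + by left; rewrite E4; rewrite E3 in pq.
  + by left.
  + have eD : D = D' by have := f_equal (@tag _ _) E3.
    subst D'; have e23 := eq_from_Tagged E3; subst l3.
    right; exists D, l1, l4; split=> //.
    by case: (leL_order D) => _ _ trans; apply: trans l12 l34.
Qed.

Lemma bigC_star (p : bigI) (x y : bM p) : star (bCp p x y) = bCp p y x.
Proof.
by rewrite !bigCE /tsandwich !(tstarM stM alpha_st) !tstar_tdelta stK C_star tmulA.
Qed.

Lemma bigC_span v : exists c, v = lincomb bC c.
Proof.
suff [c [_ ->]] : spanned_on (fun _ => True) v by exists c.
rewrite [v]tdelta_expand; apply: spanned_on_sum => z _; apply: spanned_onZ.
exact: (tdelta_spanned_on (D := dcl_of op z) (mem_dcl_of op z)).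
Qed.

Lemma bigC_free c1 c2 : lincomb bC c1 = lincomb bC c2 -> forall p x y, c1 p x y = c2 p x y.
Proof.
move=> c12 p x y; apply/eqP; rewrite -subr_eq0; apply/eqP; move: p x y.
apply: lincomb_bigC_free; rewrite -(subrr (lincomb bC c2)) -{1}c12 /lincomb -sumrB.
apply: eq_bigr => p _; rewrite -sumrB; apply: eq_bigr => x _; rewrite -sumrB.
by apply: eq_bigr => y _; rewrite scalerBl.
Qed.

Lemma bigC_C3 (p : bigI) (s : bM p) a : C3_at s a.
Proof.
rewrite [a]tdelta_expand; apply: C3_at_sum => z _.
exact/C3_atZ/C3_at_tdelta.
Qed.

Lemma bigC_cellular : cellular (fun _ : V => True) mul star (bigle leL) bC.
Proof.
split.
- split=> [|//|v _|]; [exact: bigle_order|exact: bigC_span|exact: bigC_free].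
- split=> [//|k a b _ _|a _|a b _ _|]; last exact: bigC_star.
  + by rewrite tstarD tstarZ.
  + exact: tstarK.
  + exact: tstarM.
- move=> p s a _; have [r r_ok] := bigC_C3 s a.
  by exists r => t; have [c [c0 cE]] := r_ok t; exists c.
Qed.
End CellBasis.

Theorem corollary6 (R : comPzRingType) (S : finType) (op : S -> S -> S)
  (st : S -> S) (alpha : S -> S -> R)
  (Lam : dcl op -> finType) (leL : forall D, Lam D -> Lam D -> Prop)
  (M : forall D, Lam D -> finType)
  (C : forall D (l : Lam D), M D l -> M D l -> {ffun S -> R^o})
  (one : dcl op -> S) (u : forall D : dcl op, lcl op (val D) -> S) :
  (forall x y z, op (op x y) z = op x (op y z)) ->
  (forall x, st (st x) = x) ->
  (forall x y, st (op x y) = op (st y) (st x)) ->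
  (forall x y z, alpha x y * alpha (op x y) z = alpha x (op y z) * alpha y z) ->
  (forall x y, alpha x y = alpha (st y) (st x)) ->
  (forall D, [/\ one D \in val D, op (one D) (one D) = one D & st (one D) = one D]) ->
  (forall D x y, Lrel op x (one D) -> Rrel op y (one D) ->
     exists r, alpha x y * r = 1) ->
  (forall D, cellular
     (fun f : {ffun S -> R^o} => forall z, z \notin hclass op (one D) -> f z = 0)
     (tmul op alpha) (tstar st) (leL D) (C D)) ->
  (forall D (L : lcl op (val D)), u D L \in val L /\ Rrel op (u D L) (one D)) ->
  cellular (fun _ : {ffun S -> R^o} => True) (tmul op alpha) (tstar st)
    (bigle leL) (bigC alpha st C u).
Proof. exact: bigC_cellular. Qed.
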